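(* Let $(M,(I,O))$ be an oriented map with root $h_0$ and backward function $\beta$. Then $(M,(I,O))$ is left-connected if and only if for every half-edge $h$ there exists an integer $q>0$ such that $\beta^q(h)=h_0$.
   Context: A map is $M=(H,\sigma,\alpha)$ with $H$ finite, $\alpha$ a fixed-point-free involution, $\sigma$ a permutation, $\langle\sigma,\alpha\rangle$ transitive, with root $h_0\in H$; $\phi=\sigma\alpha$ (i.e. $\phi(h)=\sigma(\alpha(h))$) is the face-permutation. An orientation is a partition $H=I\uplus O$ with $\alpha(I)=O$. The backward function is $\beta(h)=\sigma(h)$ if $h\in O$ and $\beta(h)=\phi(h)$ if $h\in I$. A left-path is a sequence $h_1,\dots,h_k$ of half-edges in $I$ such that for each $j=1,\dots,k$ there is an integer $q_j>0$ with $h_{j-1}=\sigma^{q_j}(\alpha(h_j))$ and $\sigma^p(\alpha(h_j))\in O$ for all $p=0,\dots,q_j-1$. The oriented map is left-connected if every half-edge in $I$ is the last element of some left-path. *)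

From mathcomp Require Import all_boot all_fingroup.
Set Implicit Arguments. Unset Strict Implicit. Unset Printing Implicit Defensive.

Section Maps.
Variables (H : finType) (sigma alpha : {perm H}) (h0 : H) (I O : {set H}).

Definition is_map : Prop :=
  [/\ forall h, alpha (alpha h) = h,
      forall h, alpha h != h &
      [transitive <<[set sigma; alpha]>>, on [set: H] | 'P]].

Definition is_orientation : Prop :=
  [/\ I :&: O = set0, I :|: O = [set: H] & alpha @: I = O].

Definition phi (h : H) : H := sigma (alpha h).

Definition beta (h : H) : H := if h \in O then sigma h else phi h.

Definition left_step (hprev h : H) : Prop :=
  exists q : nat, 0 < q /\ hprev = iter q sigma (alpha h) /\
    forall p, p < q -> iter p sigma (alpha h) \in O.

(** s = [h_1; ...; h_k] is a left-path (h_0 being the root) *)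
Definition left_path (s : seq H) : Prop :=
  all (fun h => h \in I) s /\
  forall j, j < size s -> left_step (nth h0 (h0 :: s) j) (nth h0 s j).

Definition left_connected : Prop :=
  forall h, h \in I -> exists s : seq H, [/\ s != [::], left_path s & last h0 s = h].

End Maps.

(** Along a backward run started at an in-going half-edge y, beta first
    jumps to sigma (alpha y) and then keeps turning around the vertex with
    sigma for as long as it stays on out-going half-edges; the first
    in-going half-edge it meets is exactly a left-path predecessor of y.
    Hence a left-path h_1, ..., h_k = h is a backward run from h to the
    root cut at its visits to I, and conversely every backward run from h
    to the root, cut at its visits to I, is a left-path ending at h.
    Out-going half-edges reduce to in-going ones since
    beta (alpha y) = sigma (alpha y) = beta y. *)

From mathcomp Require Import all_boot all_fingroup.

Set Implicit Arguments.
Unset Strict Implicit.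
Unset Printing Implicit Defensive.

Section LeftPaths.
Variables (H : finType) (sigma alpha : {perm H}) (h0 : H) (I O : {set H}).

Local Notation back := (beta sigma alpha O).
Local Notation step := (left_step sigma alpha O).
Local Notation path := (left_path sigma alpha h0 I O).

Lemma left_path_rcons s x :
  path (rcons s x) <-> [/\ x \in I, path s & step (last h0 s) x].
Proof.
have last_nth : nth h0 (h0 :: s) (size s) = last h0 s.
  by rewrite -[size s]/((size (h0 :: s)).-1) nth_last.
rewrite /left_path all_rcons size_rcons -rcons_cons; split.
  case=> /andP[xI sI] hs; split=> //.
    split=> // j js; have := hs j (leqW js).
    by rewrite !nth_rcons /= js ltnW.
  by have := hs _ (ltnSn (size s)); rewrite !nth_rcons /= ltnSn ltnn eqxx last_nth.
case=> xI [sI hs] hx; split=> [|j]; first by rewrite xI sI.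
rewrite ltnS leq_eqVlt => /predU1P[->|js].
  by rewrite !nth_rcons /= ltnSn ltnn eqxx last_nth.
by rewrite !nth_rcons /= js ltnW //; apply: hs.
Qed.

(* The hypothesis only asks for membership in O where the two runs still
   agree, so it is implied both by the sigma-side and the beta-side
   condition of a left step. *)
Lemma iter_back_sigma y n : y \notin O -> 0 < n ->
  (forall p, 0 < p < n -> iter p back y = iter p sigma (alpha y) ->
     iter p back y \in O) ->
  iter n back y = iter n sigma (alpha y).
Proof.
move=> yO; elim: n => [//|[|n] IHn] _ inO; first by rewrite /= /beta (negbTE yO).
have eq_n : iter n.+1 back y = iter n.+1 sigma (alpha y).
  by apply: IHn => // p /andP[p0 pn]; apply: inO; rewrite p0 ltnW.
by rewrite iterS {1}/beta inO ?eq_n //=.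
Qed.

Hypotheses (disjIO : I :&: O = set0) (coverIO : I :|: O = [set: H])
  (alphaIO : alpha @: I = O).

Lemma notin_O_of_I h : h \in I -> h \notin O.
Proof.
by move=> hI; apply/negP=> hO; have := in_set0 h; rewrite -disjIO inE hI hO.
Qed.

Lemma in_O_of_notin_I h : h \notin I -> h \in O.
Proof. by move=> hI; have := in_setT h; rewrite -coverIO inE (negbTE hI). Qed.

Lemma alpha_in_O h : h \in I -> alpha h \in O.
Proof. by move=> hI; rewrite -alphaIO imset_f. Qed.

Lemma left_stepP x y : y \in I ->
  step x y <-> exists2 d, 0 < d &
    x = iter d back y /\ forall n, 0 < n < d -> iter n back y \in O.
Proof.
move=> yI; have yO := notin_O_of_I yI.
split=> [[d [d0 [-> sO]]] | [d d0 [-> bO]]].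
  have eq_n n : 0 < n <= d -> iter n back y = iter n sigma (alpha y).
    case/andP=> n0 nd; apply: iter_back_sigma => // p /andP[_ pn] ->.
    exact/sO/(leq_trans pn).
  exists d => //; split; first by rewrite eq_n // d0 leqnn.
  by move=> n /andP[n0 nd]; rewrite eq_n ?n0 ?(ltnW nd) //; apply: sO.
have eq_n n : 0 < n <= d -> iter n back y = iter n sigma (alpha y).
  case/andP=> n0 nd; apply: iter_back_sigma => // p /andP[p0 pn] _.
  by apply: bO; rewrite p0 (leq_trans pn nd).
exists d; split=> //; split; first by rewrite eq_n // d0 leqnn.
case=> [_|p pd]; first exact: alpha_in_O.
by rewrite -eq_n ?(ltnW pd) //; apply: bO.
Qed.

Lemma back_alpha h : h \in I -> back (alpha h) = back h.
Proof.
by move=> hI; rewrite /beta alpha_in_O // (negbTE (notin_O_of_I hI)).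
Qed.

Lemma left_path_iter_back s : path s ->
  exists q, (s != [::] -> 0 < q) /\ iter q back (last h0 s) = h0.
Proof.
elim/last_ind: s => [|s x IHs]; first by exists 0.
case/left_path_rcons=> xI /IHs[q [_ hq]] /(left_stepP _ xI).
case=> d d0 [ex _]; exists (q + d); split; first by rewrite addn_gt0 d0 orbT.
by rewrite last_rcons iterD -ex.
Qed.

(* Take for d the first time the run re-enters I, or q if it does not
   do so earlier. *)
Lemma left_step_first_return y q : y \in I -> 0 < q ->
  exists2 d, 0 < d <= q &
    step (iter d back y) y /\ (d < q -> iter d back y \in I).
Proof.
move=> yI q0.
have exP : exists n, (0 < n) && ((iter n back y \in I) || (n == q)).
  by exists q; rewrite q0 eqxx orbT.
case: (ex_minnP exP) => d /andP[d0 Pd] dmin.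
have dq : d <= q by apply: dmin; rewrite q0 eqxx orbT.
exists d; first by rewrite d0.
split=> [|dlt]; last by move: Pd; rewrite (ltn_eqF dlt) orbF.
apply/left_stepP => //.
exists d => //; split=> // n /andP[n0 nd]; apply: in_O_of_notin_I.
by apply/negP=> nI; have := dmin n; rewrite n0 nI leqNgt nd => /(_ isT).
Qed.

Lemma iter_back_left_path q y : 0 < q -> y \in I -> iter q back y = h0 ->
  exists s, [/\ s != [::], path s & last h0 s = y].
Proof.
elim/ltn_ind: q y => q IHq y q0 yI hq.
have [d /andP[d0 dq] [hd dI]] := left_step_first_return yI q0.
have [edq | ndq] := eqVneq d q.
  exists [:: y]; split=> //; split; first by rewrite /= yI.
  by case=> [|//] _; rewrite -hq -edq.
have dlt : d < q by rewrite ltn_neqAle ndq dq.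
have [s [_ hs ls]] : exists s, [/\ s != [::], path s & last h0 s = iter d back y].
  apply: (IHq (q - d)); rewrite ?subn_gt0 ?ltn_subrL ?d0 ?dI //.
  by rewrite -iterD subnK // ltnW.
exists (rcons s y); split; rewrite ?last_rcons //; first by case: (s).
by apply/left_path_rcons; rewrite ls.
Qed.

End LeftPaths.

Theorem mainTheorem9 (H : finType) (sigma alpha : {perm H}) (h0 : H)
  (I O : {set H}) :
  is_map sigma alpha -> is_orientation alpha I O ->
  left_connected sigma alpha h0 I O <->
  (forall h : H, exists q : nat, 0 < q /\ iter q (beta sigma alpha O) h = h0).
Proof.
move=> _ [disjIO coverIO alphaIO]; split=> [lc h | reach h hI].
- have reachI y : y \in I -> exists q, 0 < q /\ iter q (beta sigma alpha O) y = h0.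
    move=> /lc[s [sn /(left_path_iter_back disjIO alphaIO)[q [q0 hq]] <-]] //.
    by exists q; split; first exact: q0.
  have [/reachI // | hI] := boolP (h \in I).
  have /imsetP[y yI ->] : h \in alpha @: I by rewrite alphaIO (in_O_of_notin_I coverIO).
  have [q [q0 <-]] := reachI y yI; exists q; split=> //.
  by rewrite -(prednK q0) !iterSr (back_alpha _ disjIO alphaIO yI).
- have [q [q0 hq]] := reach h.
  exact: (iter_back_left_path disjIO coverIO alphaIO q0 hI hq).
Qed.
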